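(* Let $n\ge 3$ and let $G$ be a unicyclic graph on $n$ vertices. (1) $\mathrm{irr}_t(G)\ge 0$, with equality if and only if $G\cong C_n$. (2) If moreover $n\ge 4$ and $G\not\cong C_n$, then $\mathrm{irr}_t(G)\ge 2n-2$. Equality holds if and only if the degree sequence of $G$ is $(3,2,\ldots,2,1)$, i.e. one vertex of degree $3$, $n-2$ vertices of degree $2$ and one vertex of degree $1$.
   Context: A unicyclic graph is a simple connected graph whose number of edges equals its number of vertices. For a graph $G=(V,E)$ and $w\in V$, $d_G(w)$ is the degree of $w$. The total irregularity is $\mathrm{irr}_t(G)=\frac12\sum_{x,y\in V}|d_G(x)-d_G(y)|$, where the sum runs over all ordered pairs of vertices. $C_n$ is the cycle on $n$ vertices. Degree sequences are listed in nonincreasing order. *)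

From HB Require Import structures.
From mathcomp Require Import all_boot all_order all_algebra.
Set Implicit Arguments. Unset Strict Implicit. Unset Printing Implicit Defensive.
Import Order.TTheory GRing.Theory Num.Theory.

Definition simple_graph (T : finType) (e : rel T) : Prop :=
  symmetric e /\ irreflexive e.

Definition edges (T : finType) (e : rel T) : {set {set T}} :=
  [set [set p.1; p.2] | p in [set p : T * T | e p.1 p.2]].

Definition connected (T : finType) (e : rel T) : Prop :=
  forall x y : T, connect e x y.

Definition unicyclic (T : finType) (e : rel T) : Prop :=
  simple_graph e /\ connected e /\ #|edges e| = #|T|.

Definition deg (T : finType) (e : rel T) (w : T) : nat := #|[set y | e w y]|.

Definition irr_t (T : finType) (e : rel T) : rat :=
  (1 / 2 * \sum_(x : T) \sum_(y : T) `|(deg e x)%:R - (deg e y)%:R|)%R.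

Definition cycle_rel (n : nat) : rel 'I_n :=
  fun i j => (j == (i.+1 %% n) :> nat) || (i == (j.+1 %% n) :> nat).

Definition iso_cycle (T : finType) (e : rel T) (n : nat) : Prop :=
  exists f : T -> 'I_n, bijective f /\ forall x y, e x y = @cycle_rel n (f x) (f y).

Definition degseq (T : finType) (e : rel T) : seq nat :=
  sort geq [seq deg e x | x <- enum T].

From HB Require Import structures.
From mathcomp Require Import all_boot all_order all_algebra.
From mathcomp Require Import zify lra.
Import Order.TTheory GRing.Theory Num.Theory.
Set Implicit Arguments. Unset Strict Implicit.

(* The total irregularity depends only on the degree sequence, whose entries
   are positive and sum to 2n for a unicyclic graph on n vertices.  If all
   degrees are equal they are all 2, and a connected 2-regular graph is a
   cycle: a non-backtracking walk first repeats a vertex at its start, so it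
   runs through all vertices in cyclic order.  Otherwise there are a vertex a
   of degree at least 3 and a leaf b.  By the triangle inequality each of the
   other n - 2 vertices v has |d(a) - d(v)| + |d(b) - d(v)| >= d(a) - 1, so
   irr_t >= (n - 1)(d(a) - 1) >= 2n - 2, with equality exactly when d(a) = 3
   and the remaining degrees are all equal, hence all equal to 2. *)

Lemma natr_distn (R : numDomainType) (u v : nat) :
  ((`|u - v|)%N%:R = `|u%:R - v%:R : R|)%R.
Proof. by rewrite natr_absz intr_norm rmorphB. Qed.

Definition irr_seq (s : seq nat) : nat := \sum_(u <- s) \sum_(v <- s) `|u - v|.

Lemma irr_seq_cons x s : irr_seq (x :: s) = 2 * \sum_(v <- s) `|x - v| + irr_seq s.
Proof.
rewrite /irr_seq big_cons big_cons distnn add0n.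
rewrite [X in _ + X](eq_bigr (fun u : nat => `|x - u| + \sum_(v <- s) `|u - v|)).
  by rewrite big_split /=; lia.
by move=> u _; rewrite big_cons distnC.
Qed.

Lemma irr_seq_perm s t : perm_eq s t -> irr_seq s = irr_seq t.
Proof.
move=> pst; rewrite /irr_seq (perm_big _ pst).
by apply: eq_bigr => u _; rewrite (perm_big _ pst).
Qed.

Lemma irr_seq_eq0 s : (irr_seq s == 0) = all (fun u => all (pred1 u) s) s.
Proof.
rewrite sum_nat_seq_eq0; apply: eq_all => u /=.
by rewrite sum_nat_seq_eq0; apply: eq_all => v /=; rewrite distn_eq0 eq_sym.
Qed.

Lemma leqif_sumn_ge c s : all (leq c) s -> c * size s <= sumn s ?= iff all (pred1 c) s.
Proof.
elim: s => [|x s IHs] /=; first by rewrite muln0.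
case/andP=> cx /IHs; rewrite mulnS eq_sym; exact: leqif_add (leqif_eq cx).
Qed.

Lemma leqif_sumn_le c s : all (geq c) s -> sumn s <= c * size s ?= iff all (pred1 c) s.
Proof.
elim: s => [|x s IHs] /=; first by rewrite muln0.
case/andP=> xc /IHs; rewrite mulnS; exact: leqif_add (leqif_eq xc).
Qed.

Lemma irr_seq_eq0_nseq c s : sumn s = c * size s ->
  (irr_seq s = 0 <-> s = nseq (size s) c).
Proof.
move=> sum_s; split=> [/eqP|->]; last first.
  by apply/eqP; rewrite irr_seq_eq0 all_nseq all_pred1_nseq orbT.
case: s sum_s => [//|x s] sum_s; rewrite irr_seq_eq0 /= eqxx /= => /andP[/all_pred1P s_x _].
have x_c : x = c.
  by move: sum_s; rewrite {1}s_x /= sumn_nseq -mulnS => /eqP; rewrite eqn_pmul2r // => /eqP.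
by rewrite /= -x_c {1}s_x.
Qed.

Lemma nseq2_extremes s : all (leq 1) s -> sumn s = 2 * size s ->
  s != nseq (size s) 2 -> (exists2 a : nat, a \in s & 3 <= a) /\ 1 \in s.
Proof.
move=> pos sum_s not_nseq; split.
  apply/hasP; apply: contraNT not_nseq => no_big; apply/eqP/all_pred1P.
  rewrite -(leqif_sumn_le _).2 ?sum_s //; apply/allP => v v_s.
  by move/hasPn: no_big => /(_ v v_s); rewrite /= -ltnNge.
apply: contraNT not_nseq => no_one; apply/eqP/all_pred1P.
rewrite -(leqif_sumn_ge _).2 ?sum_s //; apply/allP => v v_s.
by rewrite /= ltn_neqAle (allP pos) // andbT; apply: contraNneq no_one => ->.
Qed.

Lemma irr_seq_cons2 a b r : irr_seq [:: a, b & r] =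
  2 * `|a - b| + 2 * \sum_(v <- r) (`|a - v| + `|b - v|) + irr_seq r.
Proof. by rewrite !irr_seq_cons big_cons big_split /=; lia. Qed.

Lemma sum_distn_ge (a b : nat) (r : seq nat) :
  size r * `|a - b| <= \sum_(v <- r) (`|a - v| + `|b - v|).
Proof.
rewrite mulnC -count_predT -iter_addn_0 -big_const_seq.
by apply: leq_sum => v _; rewrite [`|b - v|]distnC leqD_dist.
Qed.

Lemma irr_seq_extremal k : irr_seq (3 :: nseq k 2 ++ [:: 1]) = 4 * k.+1.
Proof.
have /irr_seq_perm -> : perm_eq (3 :: nseq k 2 ++ [:: 1]) [:: 3, 1 & nseq k 2].
  by rewrite perm_cons perm_catC.
rewrite irr_seq_cons2 big_nseq iter_addn_0.
have /irr_seq_eq0_nseq [_ ->] : sumn (nseq k 2) = 2 * size (nseq k 2).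
  by rewrite sumn_nseq size_nseq mulnC.
- by rewrite /=; lia.
- by rewrite size_nseq.
Qed.

Lemma leqif_irr_seq s : all (leq 1) s -> sumn s = 2 * size s -> s != nseq (size s) 2 ->
  4 * (size s).-1 <= irr_seq s ?= iff perm_eq s (3 :: nseq (size s - 2) 2 ++ [:: 1]).
Proof.
move=> pos sum_s not_nseq.
have [[a a_s a_ge3] one_s] := nseq2_extremes pos sum_s not_nseq.
have perm_s : perm_eq s [:: a, 1 & rem 1 (rem a s)].
  apply: perm_trans (perm_to_rem a_s) _; rewrite perm_cons; apply: perm_to_rem.
  move: one_s; rewrite (perm_mem (perm_to_rem a_s)) inE.
  by case/orP=> // /eqP a1; rewrite -a1 in a_ge3.
set r := rem 1 (rem a s) in perm_s *.
rewrite (permPl perm_s) (irr_seq_perm perm_s) (perm_size perm_s) /= !subSS subn0.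
have sum_r : sumn r + a = 2 * size r + 3.
  by move: sum_s; rewrite (perm_sumn perm_s) (perm_size perm_s) /=; lia.
have a_ge1 : 1 <= a by lia.
have irr_s : irr_seq [:: a, 1 & r] = 2 * (a - 1) +
    2 * \sum_(v <- r) (`|a - v| + `|1 - v|) + irr_seq r.
  by rewrite irr_seq_cons2 distnEl.
have := sum_distn_ge a 1 r; rewrite distnEl // => D_ge.
have D_ge2 : size r * 2 <= \sum_(v <- r) (`|a - v| + `|1 - v|).
  by apply: leq_trans D_ge; rewrite leq_mul2l; lia.
move: (\sum_(v <- r) _) D_ge D_ge2 irr_s => D D_ge D_ge2 irr_s.
set k := size r in D_ge D_ge2 sum_r *.
split; first by rewrite irr_s; lia.
apply/eqP/idP => [irr_eq|/irr_seq_perm ->]; last by rewrite irr_seq_extremal.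
have a3 : a = 3.
  suff : (a - 1) * k.+1 <= 2 * k.+1 by rewrite leq_pmul2r //; lia.
  by rewrite mulnS [_ * k]mulnC; lia.
have /irr_seq_eq0_nseq [r_nseq _] : sumn r = 2 * k by lia.
rewrite a3 {1}r_nseq; last by lia.
by rewrite perm_cons perm_sym perm_catC.
Qed.

Lemma set2_eqE (T : finType) (x y a b : T) : x != y ->
  ([set x; y] == [set a; b]) = ((x, y) == (a, b)) || ((x, y) == (b, a)).
Proof.
move=> nxy; apply/idP/idP => [/eqP xy_ab|]; last first.
  by case/orP=> /eqP[-> ->]; rewrite // setUC.
have x_ab : x \in [set a; b] by rewrite -xy_ab !inE eqxx.
have y_ab : y \in [set a; b] by rewrite -xy_ab !inE eqxx orbT.
move: x_ab y_ab nxy; rewrite !inE => /orP[]/eqP-> /orP[]/eqP->; rewrite ?eqxx ?orbT //=.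
Qed.

Section SimpleGraph.

Variables (T : finType) (e : rel T).
Hypotheses (e_sym : symmetric e) (e_irr : irreflexive e).

Lemma handshake : \sum_x deg e x = 2 * #|edges e|.
Proof.
pose arcs := [set p : T * T | e p.1 p.2].
have -> : \sum_x deg e x = #|arcs|.
  rewrite -sum1_card (eq_bigl (fun p : T * T => e p.1 p.2)); last by move=> p; rewrite inE.
  rewrite -(pair_big_dep xpredT (fun x y => e x y) (fun _ _ => 1)) /=.
  by apply: eq_bigr => x _; rewrite /deg -sum1_card; apply: eq_bigl => y; rewrite inE.
rewrite -sum1_card (partition_big_imset (fun p : T * T => [set p.1; p.2])) /=.
rewrite mulnC -sum_nat_const; apply: eq_bigr => E /imsetP[[a b]].
rewrite inE /= => eab ->.
have nab : a != b by apply: contraTneq eab => ->; rewrite e_irr.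
rewrite (eq_bigl (mem [set (a, b); (b, a)])); last first.
  move=> [x y]; rewrite !inE /=; have [exy|nexy] := boolP (e x y).
    by rewrite set2_eqE //; apply: contraTneq exy => ->; rewrite e_irr.
  by apply/esym/norP; split; apply: contraNneq nexy => -[-> ->]; rewrite // e_sym.
by rewrite sum1_card cards2 -[_ != _]negbK xpair_eqE negb_and nab.
Qed.

Lemma deg_gt0 x : connected e -> 1 < #|T| -> 0 < deg e x.
Proof.
move=> e_conn T_gt1; have /card_gt0P[y] : 0 < #|predC1 x| by rewrite cardC1; lia.
rewrite inE => neq_yx.
case/connectP: (e_conn x y) => [[_ yx|z p /= /andP[exz _] _]].
  by rewrite yx eqxx in neq_yx.
by apply/card_gt0P; exists z; rewrite inE.
Qed.

End SimpleGraph.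

Lemma deg2_nbrP (T : finType) (e : rel T) (x y1 y2 y : T) : deg e x = 2 ->
  e x y1 -> e x y2 -> y1 != y2 -> e x y -> (y == y1) || (y == y2).
Proof.
move=> dx e1 e2 n12 ey.
have /eqP nbrs : [set y1; y2] == [set w | e x w].
  rewrite eqEcard cards2 n12 -/(deg e x) dx andbT.
  by apply/subsetP => z; rewrite !inE => /orP[]/eqP->.
by move: ey; rewrite -inE -nbrs !inE.
Qed.

Lemma cycle_relE n (i j : 'I_n) : cycle_rel i j = (j == ordS i) || (j == ord_pred i).
Proof.
by rewrite -[j == ord_pred i](inj_eq (@ordS_inj n)) ord_predK [ordS j == i]eq_sym.
Qed.

Lemma ordS_neq_pred n (i : 'I_n) : 2 < n -> ordS i != ord_pred i.
Proof.
move=> n_gt2; apply/eqP => /(congr1 (@ordS n)); rewrite ord_predK.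
move/(congr1 val) => /=; have lt_in := ltn_ord i.
have [lt_i1|le_n] := ltnP i.+1 n; last first.
  have eq_n : i.+1 = n by lia.
  by rewrite eq_n modnn modn_small; lia.
rewrite (modn_small lt_i1); have [lt_i2|le_n] := ltnP i.+2 n.
  by rewrite modn_small; lia.
have eq_n : i.+2 = n by lia.
by rewrite eq_n modnn; lia.
Qed.

Section TwoRegular.

Variables (T : finType) (e : rel T).
Hypotheses (e_sym : symmetric e) (e_irr : irreflexive e).
Hypothesis deg2 : forall x, deg e x = 2.

Definition next_nbr (x p : T) : T := odflt p [pick y | e x y && (y != p)].

Lemma next_nbrP x p : e x (next_nbr x p) && (next_nbr x p != p).
Proof.
rewrite /next_nbr; case: pickP => [y -> //|none].
have : [set y | e x y] \subset [set p].
  by apply/subsetP => z; rewrite !inE => exz; move: (none z); rewrite exz => /negbFE.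
by move/subset_leq_card; rewrite cards1 -/(deg e x) deg2.
Qed.

(* The state is the pair (current vertex, next vertex) of a non-backtracking walk. *)
Definition walk_step (s : T * T) : T * T := (s.2, next_nbr s.2 s.1).

Definition walk (x0 x1 : T) (k : nat) : T := (iter k walk_step (x0, x1)).1.

Variables (x0 x1 : T).
Hypothesis e01 : e x0 x1.
Local Notation w := (walk x0 x1).

Lemma walk_state k : iter k walk_step (x0, x1) = (w k, w k.+1).
Proof. by rewrite /walk iterS; case: (iter k _ _). Qed.

Lemma walkSS k : w k.+2 = next_nbr (w k.+1) (w k).
Proof. by rewrite /walk !iterS. Qed.

Lemma walk_adj k : e (w k) (w k.+1).
Proof.
by case: k => [//|k]; rewrite walkSS; case/andP: (next_nbrP (w k.+1) (w k)).
Qed.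

Lemma walk_backtrack k : w k.+2 != w k.
Proof. by rewrite walkSS; case/andP: (next_nbrP (w k.+1) (w k)). Qed.

Lemma walk_nbr k y : e (w k.+1) y -> (y == w k) || (y == w k.+2).
Proof.
apply: deg2_nbrP (deg2 _) _ _ _; first by rewrite e_sym walk_adj.
  exact: walk_adj.
by rewrite eq_sym walk_backtrack.
Qed.

Lemma walk_periodic m : w m = x0 -> w m.+1 = x1 -> forall k, w (k + m) = w k.
Proof.
move=> wm wm1 k; have := walk_state (k + m).
by rewrite iterD walk_state wm wm1 walk_state => -[].
Qed.

Lemma walk_min_repeat : exists m,
  (exists2 i, i < m & w i = w m) /\ injective (fun i : 'I_m => w i).
Proof.
pose P m := [exists i : 'I_m, w i == w m].
have exP : exists m, P m.
  have /injectivePn[i [j neq_ij wij]] : ~~ injectiveb (fun i : 'I_#|T|.+1 => w i).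
    by apply/negP => /injectiveP/leq_card; rewrite card_ord ltnn.
  have [lt_ij|lt_ji|eq_ij] := ltngtP i j; last by rewrite (val_inj eq_ij) eqxx in neq_ij.
    by exists j; apply/existsP; exists (Ordinal lt_ij); rewrite wij.
  by exists i; apply/existsP; exists (Ordinal lt_ji); rewrite wij.
case: (ex_minnP exP) => m /existsP[i /eqP wim] min_m; exists m; split; first by exists i.
move=> i1 i2 /= wi12; apply/val_inj.
wlog lt_i12 : i1 i2 wi12 / i1 < i2.
  by move=> IH; have [/IH|/IH|] := ltngtP i1 i2; [apply|move/(_ (esym wi12))->|].
have : P i2 by apply/existsP; exists (Ordinal lt_i12); rewrite wi12.
by move/min_m; rewrite leqNgt ltn_ord.
Qed.

Lemma walk_first_return : exists m,
  [/\ 2 < m, w m = x0, w m.+1 = x1 & injective (fun i : 'I_m => w i)].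
Proof.
have [m [[i lt_im wim] w_inj]] := walk_min_repeat.
have inj i1 i2 : i1 < m -> i2 < m -> w i1 = w i2 -> i1 = i2.
  by move=> lt1 lt2 /(w_inj (Ordinal lt1) (Ordinal lt2)) [].
(* If the first repeated vertex w m = w i had i > 0, then w m.-1 would be a
   third neighbour of it besides w i.-1 and w i.+1. *)
have wm0 : w m = x0.
  case: i lt_im wim => [//|i] lt_im wim.
  have [m' def_m] : exists m', m = m'.+1 by exists m.-1; lia.
  subst m; have : e (w i.+1) (w m') by rewrite wim e_sym walk_adj.
  case/walk_nbr/orP => /eqP wm'.
    by have := inj m' i ltac:(lia) ltac:(lia) wm'; lia.
  have [eq_m|ne_m] := eqVneq m' i.+1.
    by move: (walk_adj m'); rewrite -wim eq_m e_irr.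
  have eq_m' := inj m' i.+2 ltac:(lia) ltac:(lia) wm'.
  by move: (walk_backtrack i.+1); rewrite -eq_m' -wim eqxx.
have m_gt2 : 2 < m.
  clear w_inj inj wim; case: m lt_im wm0 => [|[|[|m]]] // _ wm0.
    by move: (walk_adj 0); rewrite wm0 e_irr.
  by move: (walk_backtrack 0); rewrite wm0 eqxx.
exists m; split=> //.
have [m' def_m] : exists m', m = m'.+1 by exists m.-1; lia.
have : e (w m'.+1) (w 1) by rewrite -def_m wm0.
case/walk_nbr/orP => /eqP w1; last by rewrite -def_m in w1.
by have := inj 1 m' ltac:(lia) ltac:(lia) w1; lia.
Qed.

Variable m : nat.
Hypotheses (m_gt0 : 0 < m) (wm0 : w m = x0) (wm1 : w m.+1 = x1).
Hypothesis w_inj : injective (fun i : 'I_m => w i).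

Lemma walk_mod k : w k = w (k %% m).
Proof.
rewrite {1}(divn_eq k m); elim: (k %/ m) => [|q IHq]; first by rewrite mul0n.
by rewrite mulSnr addnAC walk_periodic.
Qed.

Lemma walk_pred (i : 'I_m) : w i = w (i + m).-1.+1.
Proof. by rewrite prednK ?addn_gt0 ?m_gt0 ?orbT // walk_periodic. Qed.

Lemma walk_cycle_rel (i j : 'I_m) : e (w i) (w j) = cycle_rel i j.
Proof.
rewrite cycle_relE; apply/idP/idP => [|/orP[]/eqP->]; last first.
- by rewrite /= -walk_mod e_sym walk_pred walk_adj.
- by rewrite /= -walk_mod walk_adj.
rewrite walk_pred => /walk_nbr/orP[]/eqP w_j.
  have -> : j = ord_pred i by apply: w_inj; rewrite /= -walk_mod.
  by rewrite eqxx orbT.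
have -> : j = ordS i; last by rewrite eqxx.
apply: w_inj; rewrite /= -walk_mod w_j.
by rewrite prednK ?addn_gt0 ?m_gt0 ?orbT // -addSn walk_periodic.
Qed.

Hypothesis e_conn : connected e.

Lemma walk_onto y : y \in codom (fun i : 'I_m => w i).
Proof.
have step x z : e x z ->
    x \in codom (fun i : 'I_m => w i) -> z \in codom (fun i : 'I_m => w i).
  move=> exz /codomP[i def_x]; move: exz; rewrite def_x /= walk_pred.
  case/walk_nbr/orP => /eqP->; rewrite walk_mod.
    exact: (codom_f _ (ord_pred i)).
  rewrite prednK ?addn_gt0 ?m_gt0 ?orbT // -addSn modnDr.
  exact: (codom_f _ (ordS i)).
have closed_w : closed e (codom (fun i : 'I_m => w i)).
  by move=> x z exz; apply/idP/idP; apply: step; rewrite // e_sym.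
rewrite -(closed_connect closed_w (e_conn x0 y)) -wm0 walk_mod modnn.
exact: codom_f _ (Ordinal m_gt0).
Qed.

Lemma card_walk_period : #|T| = m.
Proof.
rewrite -[m]card_ord -(card_codom w_inj).
by apply: eq_card => y; rewrite walk_onto.
Qed.

Lemma walk_iso_cycle : iso_cycle e #|T|.
Proof.
have card_range : #|T| <= #|'I_m| by rewrite card_ord card_walk_period.
rewrite card_walk_period; case: (inj_card_bij w_inj card_range) => f wK fK.
exists f; split; first exact: Bijective fK wK.
by move=> x y; rewrite -{1}(fK x) -{1}(fK y) walk_cycle_rel.
Qed.

End TwoRegular.

Lemma two_regular_iso_cycle (T : finType) (e : rel T) :
  symmetric e -> irreflexive e -> connected e -> (forall x, deg e x = 2) ->
  0 < #|T| -> iso_cycle e #|T|.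
Proof.
move=> e_sym e_irr e_conn deg2 /card_gt0P[x0 _].
have /andP[e01 _] := next_nbrP deg2 x0 x0.
have [m [m_gt2 wm0 wm1 w_inj]] := walk_first_return e_sym e_irr deg2 e01.
exact: (walk_iso_cycle e_sym deg2 e01 (ltnW (ltnW m_gt2)) wm0 wm1 w_inj e_conn).
Qed.

Lemma iso_cycle_deg2 (T : finType) (e : rel T) n x :
  2 < n -> iso_cycle e n -> deg e x = 2.
Proof.
move=> n_gt2 [f [f_bij f_rel]].
have -> : deg e x = #|f @^-1: [set j | cycle_rel (f x) j]|.
  by apply: eq_card => y; rewrite !inE f_rel.
rewrite (on_card_preimset (onW_bij _ f_bij)).
have -> : [set j | cycle_rel (f x) j] = [set ordS (f x); ord_pred (f x)].
  by apply/setP => j; rewrite !inE cycle_relE.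
by rewrite cards2 ordS_neq_pred.
Qed.

Definition degrees (T : finType) (e : rel T) : seq nat := [seq deg e x | x <- enum T].

Section Degrees.

Variables (T : finType) (e : rel T).

Lemma size_degrees : size (degrees e) = #|T|.
Proof. by rewrite size_map cardE. Qed.

Lemma sumn_degrees : sumn (degrees e) = \sum_x deg e x.
Proof. by rewrite sumnE big_map big_enum. Qed.

Lemma degrees_nseq c : degrees e = nseq #|T| c <-> forall x, deg e x = c.
Proof.
rewrite -size_degrees; split=> [/all_pred1P/allP deg_c x|deg_c].
  by apply/eqP/deg_c/map_f; rewrite mem_enum.
by apply/all_pred1P/allP => _ /mapP[x _ ->]; rewrite /= deg_c.
Qed.

Lemma irr_tE : irr_t e = (1 / 2 * (irr_seq (degrees e))%:R)%R.
Proof.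
rewrite /irr_t /irr_seq natr_sum big_map big_enum; congr (_ * _)%R.
apply: eq_bigr => x _.
by rewrite natr_sum big_map big_enum; apply: eq_bigr => y _; rewrite natr_distn.
Qed.

End Degrees.

Lemma half_natr_eq (R : realFieldType) (k m : nat) :
  (1 / 2 * k%:R = m%:R :> R)%R <-> k = 2 * m.
Proof.
split=> [km|->]; last by rewrite natrM; lra.
by apply/eqP; rewrite -(eqr_nat R) natrM; apply/eqP; lra.
Qed.

Lemma half_natr_le (R : realFieldType) (k m : nat) :
  (m%:R <= 1 / 2 * k%:R :> R)%R <-> 2 * m <= k.
Proof. by rewrite -(ler_nat R) natrM; split=> ?; lra. Qed.

Lemma sort_geq_eq (s t : seq nat) : sorted geq t -> sort geq s = t <-> perm_eq s t.
Proof.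
move=> t_sorted; split=> [<-|st]; first by rewrite perm_sym perm_sort.
have geq_total : total geq by move=> u v; apply: leq_total.
have geq_trans : transitive geq by move=> u v w vu wv; apply: leq_trans wv vu.
have geq_anti : antisymmetric geq by move=> u v uv; apply/anti_leq; rewrite andbC.
by rewrite (perm_sortP geq_total geq_trans geq_anti _ _ st) sorted_sort.
Qed.

Lemma sorted_extremal k : sorted geq (3 :: nseq k 2 ++ [:: 1]).
Proof. by case: k => //= k; rewrite cat_path /=; elim: k => //= k ->. Qed.

Unset Implicit Arguments. Set Strict Implicit.

Theorem theorem9 (T : finType) (e : rel T) (n : nat) :
  3 <= n -> #|T| = n -> unicyclic e ->
  ((0 <= irr_t e)%R /\ (irr_t e = 0%R <-> iso_cycle e n)) /\
  (4 <= n -> ~ iso_cycle e n ->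
     ((2 * n - 2)%:R <= irr_t e)%R /\
     (irr_t e = (2 * n - 2)%:R%R <-> degseq e = 3 :: nseq (n - 2) 2 ++ [:: 1])).
Proof.
move=> n_ge3 card_T [[e_sym e_irr] [e_conn card_E]].
have size_d : size (degrees e) = n by rewrite size_degrees.
have sum_d : sumn (degrees e) = 2 * size (degrees e).
  by rewrite sumn_degrees handshake // card_E card_T size_d.
have pos_d : all (leq 1) (degrees e).
  by apply/allP => _ /mapP[x _ ->]; apply: deg_gt0 => //; rewrite card_T; lia.
have cycle_iff : iso_cycle e n <-> degrees e = nseq n 2.
  rewrite -card_T degrees_nseq; split=> [iso x|deg2].
    by apply: iso_cycle_deg2 iso; rewrite card_T.
  by apply: two_regular_iso_cycle => //; rewrite card_T; lia.
rewrite irr_tE; split.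
  split; first by rewrite mulr_ge0.
  by rewrite (half_natr_eq _ _ 0) cycle_iff -size_d -(irr_seq_eq0_nseq sum_d) muln0.
move=> n_ge4 not_iso.
have not_nseq : degrees e != nseq (size (degrees e)) 2.
  by rewrite size_d; apply/eqP => /cycle_iff.
have [le_irr eq_irr] := leqif_irr_seq pos_d sum_d not_nseq.
rewrite size_d in le_irr eq_irr; split; first by apply/half_natr_le; lia.
rewrite half_natr_eq sort_geq_eq ?sorted_extremal // -eq_irr.
by split=> [irr_eq|/eqP <-]; [apply/eqP|]; lia.
Qed.
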